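(* Let $G=(V,E)$ be a simple undirected graph with all degrees $d_i>0$, degree matrix $\mathbf{D}$, adjacency matrix $\mathbf{A}$, and $\mathbf{P}=\mathbf{A}\mathbf{D}^{-1}$. Let $t>0$, $N\ge 1$ an integer, $\mathbf{s}$ a stochastic vector, and $T_N(t\mathbf{P})=\sum_{k=0}^N\tfrac{t^k}{k!}\mathbf{P}^k$. For $k=0,\dots,N$ define the polynomial $\psi_k(x)=\sum_{m=0}^{N-k}\frac{k!}{(m+k)!}x^m$, evaluated at a matrix in the usual way. Then at any step of hk-relax, the solution vector $\mathbf{y}$ and the residual blocks $\mathbf{r}_0,\dots,\mathbf{r}_N$ satisfy $$T_N(t\mathbf{P})\mathbf{s}-\mathbf{y}=\sum_{k=0}^N\psi_k(t\mathbf{P})\mathbf{r}_k.$$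
   Context: Let $\mathbf{S}$ be the $(N+1)\times(N+1)$ matrix of zeros with first subdiagonal $[\tfrac11,\tfrac12,\dots,\tfrac1N]$, and consider the linear system $(\mathbf{I}-\mathbf{S}\otimes(t\mathbf{P}))\mathbf{v}=\mathbf{e}_1\otimes\mathbf{s}$, whose exact solution has blocks $\mathbf{v}_k=\tfrac{t^k}{k!}\mathbf{P}^k\mathbf{s}$, $k=0,\dots,N$. hk-relax maintains an approximate solution $\hat{\mathbf{v}}=[\hat{\mathbf{v}}_0;\dots;\hat{\mathbf{v}}_N]$ (initially zero) with $\mathbf{y}=\sum_{k=0}^N\hat{\mathbf{v}}_k$, and residual $\mathbf{r}=[\mathbf{r}_0;\dots;\mathbf{r}_N]=\mathbf{e}_1\otimes\mathbf{s}-(\mathbf{I}-\mathbf{S}\otimes(t\mathbf{P}))\hat{\mathbf{v}}$ (initially $\mathbf{e}_1\otimes\mathbf{s}$). Writing $r(i,j)$ for the entry of node $i$ in block $j$, a step chooses an entry $r(i,j)$, adds it to entry $i$ of $\hat{\mathbf{v}}_j$ (hence to $y_i$), sets $r(i,j)=0$, and, if $j<N$, adds $r(i,j)\tfrac{t}{j+1}\mathbf{P}\mathbf{e}_i$ to block $\mathbf{r}_{j+1}$. *)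

From mathcomp Require Import all_boot all_order all_algebra.
Set Implicit Arguments. Unset Strict Implicit. Unset Printing Implicit Defensive.
Import Order.TTheory GRing.Theory Num.Theory.
Local Open Scope ring_scope.

Definition adj_mx (R : numFieldType) (n : nat) (e : rel 'I_n) : 'M[R]_n :=
  \matrix_(i, j) (e i j)%:R.

Definition deg (n : nat) (e : rel 'I_n) (i : 'I_n) : nat := #|[set j | e i j]|.

Definition deg_mx (R : numFieldType) (n : nat) (e : rel 'I_n) : 'M[R]_n :=
  diag_mx (\row_i (deg e i)%:R).

Definition walk_mx (R : numFieldType) (n : nat) (e : rel 'I_n) : 'M[R]_n :=
  adj_mx R e *m invmx (deg_mx R e).

Definition stochastic (R : numFieldType) (n : nat) (s : 'cV[R]_n) : Prop :=
  (forall i, 0 <= s i 0) /\ \sum_i s i 0 = 1.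

Definition taylor_mx (R : numFieldType) (n N : nat) (X : 'M[R]_n) : 'M[R]_n :=
  \sum_(k < N.+1) (k`!%:R)^-1 *: X ^+ k.

Definition psi_mx (R : numFieldType) (n N k : nat) (X : 'M[R]_n) : 'M[R]_n :=
  \sum_(m < (N - k).+1) ((k`!)%:R / ((m + k)`!)%:R) *: X ^+ m.

(* hk-relax state: vhat and r stored as n x (N+1) matrices whose column j
   is the block vhat_j (resp. r_j); r(i,j) is the entry r i j. *)
Definition hk_init_r (R : numFieldType) (n N : nat) (s : 'cV[R]_n)
  : 'M[R]_(n, N.+1) :=
  \matrix_(a, b) (if b == ord0 then s a 0 else 0).

Definition hk_step_v (R : numFieldType) (n N : nat)
  (vh r : 'M[R]_(n, N.+1)) (i : 'I_n) (j : 'I_N.+1) : 'M[R]_(n, N.+1) :=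
  \matrix_(a, b) (vh a b + (if (a == i) && (b == j) then r i j else 0)).

Definition hk_step_r (R : numFieldType) (n N : nat) (P : 'M[R]_n) (t : R)
  (r : 'M[R]_(n, N.+1)) (i : 'I_n) (j : 'I_N.+1) : 'M[R]_(n, N.+1) :=
  \matrix_(a, b)
    (if (a == i) && (b == j) then 0
     else r a b + (if val b == (val j).+1
                   then r i j * (t / (val j).+1%:R) * P a i else 0)).

Inductive hk_reach (R : numFieldType) (n N : nat) (P : 'M[R]_n) (t : R)
  (s : 'cV[R]_n) : 'M[R]_(n, N.+1) -> 'M[R]_(n, N.+1) -> Prop :=
| hk_reach_init : hk_reach P t s 0 (hk_init_r N s)
| hk_reach_step vh r (i : 'I_n) (j : 'I_N.+1) :
    hk_reach P t s vh r ->
    hk_reach P t s (hk_step_v vh r i j) (hk_step_r P t r i j).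

Definition hk_y (R : numFieldType) (n N : nat) (vh : 'M[R]_(n, N.+1))
  : 'cV[R]_n := \sum_(k < N.+1) col k vh.

From mathcomp Require Import all_boot all_order all_algebra.
Import Order.TTheory GRing.Theory Num.Theory.
Local Open Scope ring_scope.

(* The sum S(r) := \sum_k psi_k(tP) r_k measures the mass still missing from y.
   At the start S = psi_0(tP) s = T_N(tP) s.  A step on entry c = r(i,j) removes
   c e_i from block j and adds c t/(j+1) P e_i to block j+1, so S changes by
   c (t/(j+1) psi_{j+1}(tP) P - psi_j(tP)) e_i = - c e_i, by the recurrence
   psi_j(X) = 1 + psi_{j+1}(X) X / (j+1) (and psi_N = 1); meanwhile y gains c e_i. *)

Section HkRelaxInvariant.
Variables (R : numFieldType) (n N : nat).
Implicit Types (P X : 'M[R]_n) (vh r : 'M[R]_(n, N.+1)).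

Lemma psi_mx_last X : psi_mx N N X = 1.
Proof.
by rewrite /psi_mx subnn big_ord1 add0n divff ?expr0 ?scale1r // pnatr_eq0 -lt0n fact_gt0.
Qed.

Lemma psi_mxS X j : (j < N)%N ->
  psi_mx N j X = 1 + (j.+1%:R)^-1 *: (psi_mx N j.+1 X * X).
Proof.
move=> ltjN; rewrite /psi_mx -(subnSK ltjN) big_ord_recl /= add0n.
rewrite divff ?pnatr_eq0 -?lt0n ?fact_gt0 // expr0 scale1r; congr (_ + _).
rewrite mulr_suml scaler_sumr; apply: eq_bigr => m _.
rewrite -mulmxE -scalemxAl mulmxE -exprSr scalerA /bump /= add1n; congr (_ *: _).
by rewrite addSnnS factS natrM !mulrA mulVf ?mul1r // pnatr_eq0.
Qed.

Lemma psi_mx0 X : psi_mx N 0 X = taylor_mx N X.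
Proof. by rewrite /psi_mx /taylor_mx subn0; apply: eq_bigr => m _; rewrite addn0 div1r. Qed.

Lemma sum_mulmx_pred1 (F : 'I_N.+1 -> 'M[R]_n) (j : 'I_N.+1) (v : 'cV[R]_n) :
  \sum_k F k *m (if k == j then v else 0) = F j *m v.
Proof.
under eq_bigr => k _ do rewrite (fun_if (mulmx (F k))) mulmx0.
by rewrite -big_mkcond big_pred1_eq.
Qed.

Lemma col_hk_init_r (s : 'cV[R]_n) k : col k (hk_init_r N s) = if k == ord0 then s else 0.
Proof. by apply/matrixP => a b; rewrite (ord1 b) !mxE; case: ifP; rewrite ?mxE. Qed.

Lemma col_hk_step_v vh r i j k :
  col k (hk_step_v vh r i j) = col k vh + (if k == j then r i j *: delta_mx i 0 else 0).
Proof.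
apply/matrixP => a b; rewrite (ord1 b) !mxE.
case: (k =P j) => [->|/eqP nkj]; case: (a =P i) => [->|/eqP nai];
  rewrite ?eqxx ?(negbTE nkj) ?(negbTE nai) /= ?mxE ?eqxx ?(negbTE nai) /=.
all: by rewrite ?mulr1 ?mulr0 ?addr0.
Qed.

Lemma col_hk_step_r P t r i j k :
  col k (hk_step_r P t r i j) = col k r
    - (if k == j then r i j *: delta_mx i 0 else 0)
    + (if val k == (val j).+1 then (r i j * (t / (val j).+1%:R)) *: col i P else 0).
Proof.
apply/matrixP => a b; rewrite (ord1 b) !mxE.
case: (k =P j) => [->|nkj]; case: (a =P i) => [->|nai] /=;
  rewrite ?(ltn_eqF (ltnSn j)); repeat case: ifP => _; rewrite ?mxE ?eqxx /=.
all: rewrite ?andbT ?mulr1 ?subrr ?subr0 ?addr0 ?add0r //.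
all: by case: eqP => //; rewrite mulr0 subr0.
Qed.

Lemma hk_y0 : hk_y (0 : 'M[R]_(n, N.+1)) = 0.
Proof. by rewrite /hk_y big1 // => k _; apply/matrixP => a b; rewrite !mxE. Qed.

Lemma hk_y_step vh r i j :
  hk_y (hk_step_v vh r i j) = hk_y vh + r i j *: delta_mx i 0.
Proof.
rewrite /hk_y; under eq_bigr do rewrite col_hk_step_v.
by rewrite big_split /= -big_mkcond big_pred1_eq.
Qed.

Lemma psi_push_forward P t i j c : (j < N)%N ->
  psi_mx N j.+1 (t *: P) *m ((c * (t / j.+1%:R)) *: col i P)
    = (psi_mx N j (t *: P) - 1) *m (c *: delta_mx i 0).
Proof.
move=> ltjN; rewrite (@psi_mxS (t *: P) j ltjN) addrC addKr colE -mulmxE.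
rewrite -!scalemxAr -!scalemxAl -?scalemxAr -?scalemxAl !scalerA mulmxA.
by congr (_ *: _); rewrite mulrAC mulrA.
Qed.

Lemma sum_psi_hk_step_r P (t : R) r (i : 'I_n) (j : 'I_N.+1) :
  \sum_(k < N.+1) psi_mx N k (t *: P) *m col k (hk_step_r P t r i j)
    = \sum_(k < N.+1) psi_mx N k (t *: P) *m col k r - r i j *: delta_mx i 0.
Proof.
under eq_bigr do rewrite col_hk_step_r mulmxDr mulmxBr.
rewrite big_split sumrB /= sum_mulmx_pred1 -addrA; congr (_ + _).
have [ltjN | leNj] := ltnP j N.
- have ltj1 : (j.+1 < N.+1)%N by [].
  under eq_bigr => k _ do rewrite (_ : (val k == j.+1) = (k == Ordinal ltj1)) //.
  by rewrite sum_mulmx_pred1 psi_push_forward // mulmxBl mul1mx addKr.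
- have eqjN : val j = N by apply/eqP; rewrite eqn_leq leNj -ltnS ltn_ord.
  rewrite big1 => [|k _]; last by rewrite ltn_eqF ?mulmx0 // eqjN.
  by rewrite eqjN psi_mx_last mul1mx addr0.
Qed.

Lemma hk_relax_residual_invariant P t s vh r : hk_reach P t s vh r ->
  taylor_mx N (t *: P) *m s - hk_y vh =
  \sum_(k < N.+1) psi_mx N k (t *: P) *m col k r.
Proof.
elim => [|vh0 r0 i j _ IH].
  under eq_bigr do rewrite col_hk_init_r.
  by rewrite hk_y0 subr0 sum_mulmx_pred1 psi_mx0.
by rewrite hk_y_step sum_psi_hk_step_r -IH opprD addrA.
Qed.

End HkRelaxInvariant.

Theorem lemma1 (R : realFieldType) (n : nat) (e : rel 'I_n)
  (e_sym : forall i j, e i j = e j i) (e_irr : forall i, ~~ e i i)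
  (deg_pos : forall i, (0 < deg e i)%N)
  (t : R) (t_pos : 0 < t) (N : nat) (N_ge1 : (1 <= N)%N)
  (s : 'cV[R]_n) (s_stoch : stochastic s)
  (vh r : 'M[R]_(n, N.+1))
  (reach : hk_reach (walk_mx R e) t s vh r) :
  taylor_mx N (t *: walk_mx R e) *m s - hk_y vh =
  \sum_(k < N.+1) psi_mx N k (t *: walk_mx R e) *m col k r.
Proof. exact: hk_relax_residual_invariant reach. Qed.
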